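(* Let $F$ be a minimally unsatisfiable clause-set and $F',F''\in\mathrm{sDP}(F)$. Then $n(F')=n(F'')$.
   Context: Literals are variables $v$ and complements $\overline{v}$; a clause is a finite set of literals with no complementary pair; a clause-set is a finite set of clauses; $n(F)$ is the number of variables occurring in $F$; $\mathrm{ldeg}_F(x)$ is the number of clauses of $F$ containing literal $x$. $\mathrm{DP}_v(F) := \{C \in F : v \notin \mathrm{var}(C)\} \cup \{(C \cup D)\setminus\{v,\overline{v}\} : C, D \in F,\ C \cap \overline{D} = \{v\}\}$. A variable $v$ is singular for $F$ if $\min(\mathrm{ldeg}_F(v),\mathrm{ldeg}_F(\overline{v}))=1$; $F$ is nonsingular if it has none. A singular DP-reduction step is $F\leadsto\mathrm{DP}_v(F)$ for minimally unsatisfiable $F$ and $v$ singular for $F$. $\mathrm{sDP}(F)$ is the set of nonsingular minimally unsatisfiable clause-sets obtainable from $F$ by zero or more singular DP-reduction steps. *)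

From mathcomp Require Import all_boot all_order finmap.
Set Implicit Arguments. Unset Strict Implicit. Unset Printing Implicit Defensive.
Local Open Scope fset_scope.

(* Variables are natural numbers; a literal is (v, true) for v and
   (v, false) for the complement of v. *)
Definition var := nat.
Definition lit := (nat * bool)%type.
Definition compl (x : lit) : lit := (x.1, ~~ x.2).
Definition pos (v : var) : lit := (v, true).
Definition neg (v : var) : lit := (v, false).

Definition clause := {fset lit}.
Definition clauseset := {fset clause}.

Definition wf_clause (C : clause) : bool := [forall x : C, compl (val x) \notin C].
Definition wf_clauseset (F : clauseset) : bool := [forall C : F, wf_clause (val C)].

Definition compl_clause (C : clause) : clause := [fset compl x | x in C].
Definition vars_clause (C : clause) : {fset nat} := [fset x.1 | x in C].
Definition vars (F : clauseset) : {fset nat} := \bigcup_(C <- F) vars_clause C.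

Definition nvars (F : clauseset) : nat := #|` vars F|.

Definition ldeg (F : clauseset) (x : lit) : nat := #|` [fset C in F | x \in C]|.

Definition lit_true (f : nat -> bool) (x : lit) : bool := f x.1 == x.2.
Definition satisfies (f : nat -> bool) (F : clauseset) : Prop :=
  forall C, C \in F -> exists2 x, x \in C & lit_true f x.
Definition satisfiable (F : clauseset) : Prop := exists f, satisfies f F.

Definition minimally_unsat (F : clauseset) : Prop :=
  ~ satisfiable F /\ forall G : clauseset, G `<` F -> satisfiable G.

Definition DP (v : var) (F : clauseset) : clauseset :=
  [fset C in F | v \notin vars_clause C] `|`
  [fset (C `|` D) `\` [fset pos v; neg v] | C in F, D in F
     & C `&` compl_clause D == [fset pos v]].

Definition singular (F : clauseset) (v : var) : Prop :=
  minn (ldeg F (pos v)) (ldeg F (neg v)) = 1.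

Definition nonsingular (F : clauseset) : Prop := forall v, ~ singular F v.

Inductive sDP_reach : clauseset -> clauseset -> Prop :=
| sDP_refl F : sDP_reach F F
| sDP_step F v G : minimally_unsat F -> singular F v ->
    sDP_reach (DP v F) G -> sDP_reach F G.

Definition in_sDP (F G : clauseset) : Prop :=
  sDP_reach F G /\ nonsingular G /\ minimally_unsat G.

(* Eliminating by DP a singular variable whose literal [x] has the unique clause
   [C] replaces the clauses containing [~x] by their resolvents with [C]; this
   keeps [F] minimally unsatisfiable and removes exactly one variable.  Two such
   eliminations on variables [v <> w] either commute (each variable stays
   singular after eliminating the other, and the two orders give the same
   clause-set), or the two literals share their unique clause while both
   complements occur at least twice.  In that case a singular variable [u] of
   either reduct is already singular in [F] and commutes with both [v] and [w],
   and if there is no such [u] both reducts are nonsingular with [n(F) - 1]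
   variables.  A Newman-style induction
   on [n(F)] then shows that all nonsingular results have the same number of
   variables. *)

From mathcomp Require Import all_boot all_order finmap.
From Stdlib Require Import Classical.
Set Implicit Arguments. Unset Strict Implicit. Unset Printing Implicit Defensive.
Local Open Scope fset_scope.

Lemma complK (x : lit) : compl (compl x) = x.
Proof. by case: x => a b; rewrite /compl /= negbK. Qed.

Lemma eq_var_lit (t x : lit) : t.1 = x.1 -> t = x \/ t = compl x.
Proof. by case: t x => a [] [c []] /= ->; rewrite /compl /=; auto. Qed.

Lemma neq_var_lit (t x : lit) : t.1 != x.1 -> (t == x) = false /\ (t == compl x) = false.
Proof. by move=> H; split; apply/eqP => E; move: H; rewrite E eqxx. Qed.

Lemma neq_lit_var (t p : lit) : t != p -> t != compl p -> t.1 != p.1.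
Proof. by move=> h1 h2; apply/eqP => /eq_var_lit [] E; rewrite E eqxx in h1 h2. Qed.

Definition upd (f : nat -> bool) (v : nat) (b : bool) : nat -> bool :=
  fun n => if n == v then b else f n.

Lemma lit_true_compl f x : lit_true f (compl x) = ~~ lit_true f x.
Proof. by case: x => a b; rewrite /lit_true /compl /=; case: (f a); case: b. Qed.

Lemma lit_true_upd f v b t : t.1 != v -> lit_true (upd f v b) t = lit_true f t.
Proof. by move=> H; rewrite /lit_true /upd (negbTE H). Qed.

Lemma lit_true_upd_var f (t : lit) : lit_true (upd f t.1 t.2) t.
Proof. by rewrite /lit_true /upd eqxx. Qed.

Lemma vars_clauseP v K : reflect (exists b, (v, b) \in K) (v \in vars_clause K).
Proof.
apply: (iffP idP) => [/imfsetP [t tK ->]|[b H]]; last by apply/imfsetP; exists (v, b).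
by exists t.2; case: t tK.
Qed.

Lemma mem_vars_clause (t : lit) K : t \in K -> t.1 \in vars_clause K.
Proof. by move=> H; apply/vars_clauseP; exists t.2; case: t H. Qed.

Lemma vars_clause_lit (p : lit) K : p.1 \in vars_clause K -> p \in K \/ compl p \in K.
Proof.
by move/vars_clauseP => [b]; case: (eq_var_lit (t := (p.1, b)) (x := p) erefl) => <-; auto.
Qed.

Lemma notin_vars_clause (p : lit) K :
  (p.1 \notin vars_clause K) = (p \notin K) && (compl p \notin K).
Proof.
apply/idP/andP => [H|[h1 h2]].
  by split; apply: contra H => /mem_vars_clause.
by apply/negP => /vars_clause_lit []; apply/negP.
Qed.

Lemma varsP v F : reflect (exists2 K, K \in F & v \in vars_clause K) (v \in vars F).
Proof.
apply: (iffP idP) => [/bigfcupP [K /andP [KF _] vK]|[K KF vK]]; first by exists K.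
by apply/bigfcupP; exists K; rewrite ?KF.
Qed.

Definition clause_true (f : nat -> bool) (K : clause) := exists2 t, t \in K & lit_true f t.

Lemma MU_sat_but_one F D : minimally_unsat F -> D \in F ->
  exists f, (forall K, K \in F -> K != D -> clause_true f K) /\
            (forall t, t \in D -> ~~ lit_true f t).
Proof.
move=> [U M] DF; have [f Hf] := M _ (fproperD1 DF).
have sat K : K \in F -> K != D -> clause_true f K by move=> KF KD; apply: Hf; apply/fsetD1P.
exists f; split => // t tD; apply/negP => tt; apply: U; exists f => K KF.
by case: (eqVneq K D) => [->|]; [exists t|apply: sat].
Qed.

Lemma MU_clause_wf F K t : minimally_unsat F -> K \in F -> t \in K -> compl t \notin K.
Proof.
move=> MU KF tK; apply/negP => ctK; have [f [_ Hn]] := MU_sat_but_one MU KF.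
by move: (Hn _ ctK); rewrite lit_true_compl (negPf (Hn _ tK)).
Qed.

Lemma satisfiable_sub (G H : clauseset) : G `<=` H -> satisfiable H -> satisfiable G.
Proof. by move=> /fsubsetP GH [f Hf]; exists f => K /GH; apply: Hf. Qed.

Lemma fproper_subD1 (K : choiceType) (A B : {fset K}) :
  A `<` B -> exists2 b, b \in B & A `<=` B `\ b.
Proof.
rewrite fproperE => /andP [AB /fsubsetPn [b bB bA]].
by exists b; rewrite // fsubsetD1 AB bA.
Qed.

Lemma minimally_unsatP (F : clauseset) : ~ satisfiable F ->
  (forall R, R \in F -> satisfiable (F `\ R)) -> minimally_unsat F.
Proof.
move=> U M; split => // G /fproper_subD1 [R RF GR].
exact: satisfiable_sub GR (M R RF).
Qed.

Definition res (X Y : clause) (p : lit) : clause := (X `|` Y) `\` [fset p; compl p].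

Lemma in_res z X Y p :
  (z \in res X Y p) = [&& z != p, z != compl p & (z \in X) || (z \in Y)].
Proof. by rewrite /res !inE negb_or andbA. Qed.

Lemma in_res_var t X Y p : t.1 != p.1 -> (t \in res X Y p) = (t \in X) || (t \in Y).
Proof. by move=> /neq_var_lit [h1 h2]; rewrite in_res h1 h2. Qed.

Lemma res_novar X Y (p : lit) : p.1 \notin vars_clause (res X Y p).
Proof. by apply/negP => /vars_clause_lit []; rewrite in_res eqxx ?andbF. Qed.

Lemma notin_vars_res (q : lit) X Y p : q.1 != p.1 ->
  (q.1 \notin vars_clause (res X Y p)) =
  (q.1 \notin vars_clause X) && (q.1 \notin vars_clause Y).
Proof.
move=> qp; rewrite !notin_vars_clause !in_res_var //.
by rewrite !negb_or; case: (q \in X); case: (q \in Y); case: (compl q \in X).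
Qed.

Lemma resC X Y p : res X Y p = res Y X p.
Proof. by rewrite /res fsetUC. Qed.

Lemma res_compl X Y p : res X Y (compl p) = res X Y p.
Proof. by rewrite /res complK (fsetUC [fset compl p]). Qed.

Ltac decide_mem := repeat match goal with
  | |- context [?z == ?a] => case: (z == a)
  | |- context [?z \in ?A] => case: (z \in A) end; done.

Lemma res_resE X Y Z p q : p \notin Z -> compl p \notin Z ->
  res (res X Y p) Z q = (X `|` Y `|` Z) `\` ([fset p; compl p] `|` [fset q; compl q]).
Proof.
move=> pZ cpZ; apply/fsetP => z; rewrite /res !inE.
case: (eqVneq z p) => [->|_]; first by rewrite (negbTE pZ); decide_mem.
case: (eqVneq z (compl p)) => [->|_]; first by rewrite (negbTE cpZ); decide_mem.
decide_mem.
Qed.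

Lemma res_resA X Y Z p q : p \notin Z -> compl p \notin Z -> q \notin X -> compl q \notin X ->
  res (res X Y p) Z q = res X (res Y Z q) p.
Proof.
move=> pZ cpZ qX cqX; rewrite res_resE // (resC X) res_resE //.
by apply/fsetP => z; rewrite !inE; decide_mem.
Qed.

Lemma res_res_shared X Y Z p q : q \notin X -> compl q \notin X ->
  res (res X Y p) (res X Z p) q = res X (res Y Z q) p.
Proof.
move=> qX cqX; rewrite res_resE ?in_res ?eqxx ?andbF // (resC X (res Y Z q)) res_resE //.
by apply/fsetP => z; rewrite /res !inE; decide_mem.
Qed.

Lemma res_true X Y p f : compl p \notin X -> p \notin Y ->
  clause_true f X -> clause_true f Y -> clause_true f (res X Y p).
Proof.
move=> cpX pY [t tX tt] [t' tY t't].
case: (eqVneq t p) => [tp|tp]; last first.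
  exists t => //; rewrite in_res tX tp orTb andbT.
  by apply: contraNneq cpX => <-.
exists t' => //; rewrite in_res tY orbT andbT; apply/andP; split.
  by apply: contraNneq pY => <-.
by apply: contraTneq t't => ->; rewrite lit_true_compl -tp tt.
Qed.

(** * Eliminating a literal with a unique clause *)

Definition unique_in (F : clauseset) (x : lit) (C : clause) :=
  [/\ C \in F, x \in C & forall K, K \in F -> x \in K -> K = C].

Lemma unique_inP F x C K : unique_in F x C -> K \in F -> x \in K -> K = C.
Proof. by case=> _ _; apply. Qed.

Lemma pos_neg_var (p : lit) : [fset pos p.1; neg p.1] = [fset p; compl p].
Proof.
case: p => v [|]; rewrite /pos /neg /compl //=.
by apply/fsetP => z; rewrite !inE orbC.
Qed.

Lemma in_compl_clause z D : (z \in compl_clause D) = (compl z \in D).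
Proof.
apply/imfsetP/idP => [[d dD ->]|H]; first by rewrite complK.
by exists (compl z); rewrite ?complK.
Qed.

Definition occurs (F : clauseset) (p : lit) := exists2 K, K \in F & p \in K.

Lemma vars_occursP v (G : clauseset) : reflect (exists b, occurs G (v, b)) (v \in vars G).
Proof.
apply: (iffP (varsP _ _)) => [[K KG /vars_clauseP [b vK]]|[b [K KG vK]]].
  by exists b, K.
by exists K => //; apply/vars_clauseP; exists b.
Qed.

Definition singular_lit (F : clauseset) (p : lit) :=
  (exists C, unique_in F p C) /\ occurs F (compl p).

Lemma ldeg1P (F : clauseset) (p : lit) : ldeg F p = 1 <-> exists C, unique_in F p C.
Proof.
split => [/eqP /cardfs1P [C E]|[C [CF pC uC]]].
  have : C \in [fset K in F | p \in K] by rewrite E inE.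
  rewrite !inE => /andP [CF pC]; exists C; split => // K KF pK.
  by apply/fset1P; rewrite -E !inE KF pK.
apply/eqP/cardfs1P; exists C; apply/fsetP => K; rewrite !inE.
by apply/andP/eqP => [[KF pK]|->]; [apply: uC|].
Qed.

Lemma ldeg_gt0P (F : clauseset) (p : lit) : (0 < ldeg F p)%N <-> occurs F p.
Proof.
rewrite /ldeg cardfs_gt0; split => [/fset0Pn [K]|[K KF pK]].
  by rewrite !inE => /andP [KF pK]; exists K.
by apply/fset0Pn; exists K; rewrite !inE KF pK.
Qed.

Lemma ldeg_gt1 (F : clauseset) (p : lit) (K1 K2 : clause) :
  K1 \in F -> K2 \in F -> p \in K1 -> p \in K2 -> K1 != K2 -> (1 < ldeg F p)%N.
Proof.
move=> K1F K2F pK1 pK2 K12.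
have : [fset K1; K2] `<=` [fset K in F | p \in K].
  by apply/fsubsetP => K; rewrite !inE => /orP [] /eqP ->; rewrite ?K1F ?K2F ?pK1 ?pK2.
by move/fsubset_leq_card; rewrite cardfs2 K12.
Qed.

Lemma singularP (F : clauseset) (v : var) :
  singular F v <-> exists p, p.1 = v /\ singular_lit F p.
Proof.
rewrite /singular /singular_lit; split.
  case: (leqP (ldeg F (pos v)) (ldeg F (neg v))) => [le|lt].
    move=> E; exists (pos v); split; rewrite // -ldeg1P -ldeg_gt0P.
    by split => //; rewrite (leq_trans _ le) ?E.
  move=> E; exists (neg v); split; rewrite // -ldeg1P -ldeg_gt0P.
  by split => //; apply: leq_ltn_trans (leq0n _) lt.
move=> [[v' []] [/= -> [/ldeg1P E /ldeg_gt0P lt]]].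
  by rewrite -/(pos v) E; apply/minn_idPl.
by rewrite -/(neg v) E; apply/minn_idPr.
Qed.

Section UniqueLiteral.

Variables (F : clauseset) (x : lit) (C : clause).
Hypotheses (MU : minimally_unsat F) (UC : unique_in F x C).

Let CF : C \in F. Proof. by case: UC. Qed.
Let xC : x \in C. Proof. by case: UC. Qed.
Let uniqC K : K \in F -> x \in K -> K = C. Proof. exact: unique_inP UC. Qed.

Lemma compl_notin_unique_clause : compl x \notin C.
Proof. exact: MU_clause_wf MU CF xC. Qed.

Lemma notin_clause_compl Y : Y \in F -> compl x \in Y -> x \notin Y.
Proof. by move=> YF; apply: contraTN => /(MU_clause_wf MU YF). Qed.

(* If another literal of [C] were true, flipping [x] would satisfy [F]. *)
Lemma unique_clause_falsified D f : D \in F -> compl x \in D ->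
  (forall K, K \in F -> K != D -> clause_true f K) ->
  (forall t, t \in D -> ~~ lit_true f t) ->
  forall t, t \in C -> t != x -> ~~ lit_true f t.
Proof.
move=> DF xD Hf Hn t tC tx; apply/negP => tt; case: MU => U _; apply: U.
exists (upd f x.1 (~~ x.2)) => K KF.
case: (eqVneq K D) => [->|KD].
  by exists (compl x) => //; rewrite /lit_true /upd eqxx /compl.
have [t' t'K t't] := Hf K KF KD.
case: (eqVneq t'.1 x.1) => [/eq_var_lit [et'|et']|t'x]; last first.
- by exists t'; rewrite ?lit_true_upd.
- by move: (Hn _ xD); rewrite -et' t't.
rewrite et' in t'K; rewrite (uniqC KF t'K).
exists t => //; rewrite lit_true_upd //; apply: neq_lit_var => //.
by apply: contraTneq tC => ->; apply: compl_notin_unique_clause.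
Qed.

Lemma unique_clause_clash D z :
  D \in F -> compl x \in D -> z \in C -> compl z \in D -> z = x.
Proof.
move=> DF xD zC zD; apply/eqP/negPn/negP => zx.
have [f [Hf Hn]] := MU_sat_but_one MU DF.
move: (Hn _ zD) (unique_clause_falsified DF xD Hf Hn zC zx).
by rewrite lit_true_compl negbK => ->.
Qed.

Lemma res_neq_novar D K : D \in F -> compl x \in D -> K \in F ->
  x.1 \notin vars_clause K -> res C D x != K.
Proof.
move=> DF xD KF nK; apply/eqP => E.
have [f [Hf Hn]] := MU_sat_but_one MU DF.
have KD : K != D by apply: contraNneq nK => ->; apply: (mem_vars_clause xD).
have [t tK tt] := Hf K KF KD.
move: tK; rewrite -E in_res => /and3P [tx _ /orP [tC|tD]].
  by move: (unique_clause_falsified DF xD Hf Hn tC tx); rewrite tt.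
by move: (Hn t tD); rewrite tt.
Qed.

Lemma res_inj D1 D2 : D1 \in F -> compl x \in D1 -> D2 \in F -> compl x \in D2 ->
  res C D1 x = res C D2 x -> D1 = D2.
Proof.
move=> D1F x1 D2F x2 E; apply/eqP/negPn/negP; rewrite eq_sym => ne.
have [f [Hf Hn]] := MU_sat_but_one MU D1F.
have [t tD tt] := Hf D2 D2F ne.
have tx1 : t != compl x by apply: contraTneq tt => ->; apply: Hn.
have tx : t != x.
  by apply: contraTneq tD => ->; apply: notin_clause_compl.
have : t \in res C D2 x by rewrite in_res tx tx1 tD orbT.
rewrite -E in_res => /and3P [_ _ /orP [tC|tD1]].
  by move: (unique_clause_falsified D1F x1 Hf Hn tC tx); rewrite tt.
by move: (Hn t tD1); rewrite tt.
Qed.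

Lemma clash_unique_set Y : Y \in F -> compl x \in Y -> C `&` compl_clause Y = [fset x].
Proof.
move=> YF xY; apply/fsetP => z; rewrite in_fsetI in_compl_clause inE.
by apply/andP/eqP => [[zC zY]|->]; [apply: unique_clause_clash YF xY zC zY|].
Qed.

Lemma clash_unique_setC Y : Y \in F -> compl x \in Y -> Y `&` compl_clause C = [fset compl x].
Proof.
move=> YF xY; apply/fsetP => z; rewrite in_fsetI in_compl_clause inE.
apply/andP/eqP => [[zY zC]|->]; last by rewrite complK.
by rewrite -(unique_clause_clash YF xY zC) ?complK.
Qed.

Lemma pos_or_compl_pos : x = pos x.1 \/ compl x = pos x.1.
Proof. by case: x => v []; [left|right]. Qed.

Lemma DP_uniqueP K : K \in DP x.1 F <->
  (K \in F /\ x.1 \notin vars_clause K) \/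
  exists2 Y, (Y \in F) && (compl x \in Y) & K = res C Y x.
Proof.
rewrite /DP in_fsetU pos_neg_var -/(res _ _ _); split.
  case/orP => [|/imfset2P [A AF [B]]]; first by rewrite !inE => /andP; left.
  rewrite !inE /= => /andP [BF /eqP AB] ->; right.
  have : pos x.1 \in A `&` compl_clause B by rewrite AB inE.
  rewrite in_fsetI in_compl_clause => /andP.
  case: pos_or_compl_pos => <- [xA xB].
    by exists B; rewrite ?BF ?(uniqC AF xA).
  rewrite complK in xB; exists A; first by rewrite AF.
  by rewrite (uniqC BF xB) resC.
case => [[KF Kv]|[Y /andP [YF xY] ->]]; first by rewrite !inE KF Kv.
apply/orP; right; apply/imfset2P.
case: pos_or_compl_pos => <-.
  by exists C => //; exists Y; rewrite // !inE YF (clash_unique_set YF xY) eqxx.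
exists Y => //; exists C; last by rewrite resC.
by rewrite !inE CF (clash_unique_setC YF xY) eqxx.
Qed.

Lemma DP_keep K : K \in F -> x.1 \notin vars_clause K -> K \in DP x.1 F.
Proof. by move=> KF Kv; apply/DP_uniqueP; left. Qed.

Lemma DP_res Y : Y \in F -> compl x \in Y -> res C Y x \in DP x.1 F.
Proof. by move=> YF xY; apply/DP_uniqueP; right; exists Y; rewrite ?YF ?xY. Qed.

Lemma DP_novar K : K \in DP x.1 F -> x.1 \notin vars_clause K.
Proof. by case/DP_uniqueP => [[]|[Y _ ->]] //; apply: res_novar. Qed.

Lemma DP_unsat : ~ satisfiable (DP x.1 F).
Proof.
move=> [f Hf]; case: MU => U _; apply: U.
have keep b K : K \in F -> x.1 \notin vars_clause K -> clause_true (upd f x.1 b) K.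
  move=> KF Kv; have [t tK tt] := Hf K (DP_keep KF Kv).
  exists t; rewrite // lit_true_upd //.
  by apply: contraNneq Kv => <-; apply: mem_vars_clause.
case: (classic (exists2 t, t \in C & (t != x) && lit_true f t)) => [[t tC /andP [tx tt]]|NT].
  exists (upd f x.1 (~~ x.2)) => K KF.
  case: (boolP (x.1 \in vars_clause K)) => [/vars_clause_lit [xK|cK]|]; last exact: keep.
    rewrite (uniqC KF xK); exists t; rewrite // lit_true_upd //.
    apply: neq_lit_var => //.
    by apply: contraTneq tC => ->; apply: compl_notin_unique_clause.
  by exists (compl x) => //; rewrite /lit_true /upd eqxx.
exists (upd f x.1 x.2) => K KF.
case: (boolP (x.1 \in vars_clause K)) => [/vars_clause_lit [xK|cK]|]; last exact: keep.
  by exists x => //; apply: lit_true_upd_var.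
have [t] := Hf _ (DP_res KF cK).
rewrite in_res => /and3P [tx tc /orP [tC|tK]] tt; first by case: NT; exists t; rewrite ?tx.
by exists t; rewrite // lit_true_upd //; apply: neq_lit_var.
Qed.

Lemma DP_minimally_unsat : minimally_unsat (DP x.1 F).
Proof.
apply: minimally_unsatP => [|R /DP_uniqueP [[RF Rv]|[Y0 /andP [Y0F xY0] ->]]].
- exact: DP_unsat.
- have [f [Hf _]] := MU_sat_but_one MU RF.
  have xR K : x.1 \in vars_clause K -> K != R by move=> Kv; apply: contraNneq Rv => <-.
  exists f => K /fsetD1P [KR /DP_uniqueP [[KF _]|[Y /andP [YF xY] ->]]]; first exact: Hf.
  apply: res_true; rewrite ?compl_notin_unique_clause ?notin_clause_compl //.
    by apply: Hf; rewrite // xR // (mem_vars_clause xC).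
  by apply: Hf; rewrite // xR // (mem_vars_clause xY).
- have [f [Hf _]] := MU_sat_but_one MU Y0F.
  exists f => K /fsetD1P [KR /DP_uniqueP [[KF Kv]|[Y /andP [YF xY] EK]]].
    by apply: Hf; rewrite // (contraNneq _ Kv) // => ->; apply: mem_vars_clause xY0.
  rewrite EK; apply: res_true; rewrite ?compl_notin_unique_clause ?notin_clause_compl //.
    by apply: Hf; rewrite // (contraNneq _ (notin_clause_compl Y0F xY0)) // => <-.
  by apply: Hf; rewrite // (contraNneq _ KR) // EK => ->.
Qed.

Lemma occurs_of_DP t : occurs (DP x.1 F) t -> occurs F t.
Proof.
move=> [K /DP_uniqueP [[KF _]|[Y /andP [YF _] ->]]]; first by exists K.
by rewrite in_res => /and3P [_ _ /orP [tC|tY]]; [exists C|exists Y].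
Qed.

Lemma DP_occurs t : occurs F (compl x) -> t.1 != x.1 -> occurs F t -> occurs (DP x.1 F) t.
Proof.
move=> [Y0 Y0F xY0] tx [K KF tK].
case: (boolP (x.1 \in vars_clause K)) => [/vars_clause_lit [xK|xK]|Kv].
- exists (res C Y0 x); first exact: DP_res.
  by rewrite in_res_var // -(uniqC KF xK) tK.
- by exists (res C K x); rewrite ?DP_res ?in_res_var ?tK ?orbT.
- by exists K; rewrite ?DP_keep.
Qed.

Lemma vars_DP : occurs F (compl x) -> vars (DP x.1 F) = vars F `\ x.1.
Proof.
move=> xF; apply/fsetP => u; rewrite in_fsetD1; apply/idP/andP.
  move=> /vars_occursP [b ub]; split.
    have [K KG uK] := ub; apply: contraNneq (DP_novar KG) => <-.
    exact: mem_vars_clause uK.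
  by apply/vars_occursP; exists b; apply: occurs_of_DP.
by move=> [ux /vars_occursP [b ub]]; apply/vars_occursP; exists b; apply: DP_occurs.
Qed.

Lemma nvars_DP : occurs F (compl x) -> nvars (DP x.1 F) = (nvars F).-1.
Proof.
move=> xF; rewrite /nvars vars_DP // (cardfsD1 x.1 (vars F)).
by have -> : x.1 \in vars F by apply/varsP; exists C; rewrite ?(mem_vars_clause xC).
Qed.

Lemma DP_unique_keep p Cp : p.1 != x.1 -> unique_in F p Cp -> Cp != C ->
  compl x \notin Cp -> unique_in (DP x.1 F) p Cp.
Proof.
move=> px [CpF pCp uCp] CpC xCp; split => //.
  rewrite DP_keep // notin_vars_clause xCp andbT.
  by apply: contraNN CpC => /(uniqC CpF) ->.
move=> K /DP_uniqueP [[KF _] pK|[Y /andP [YF xY] ->]]; first exact: uCp.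
rewrite in_res_var // => /orP [pC|pY]; first by rewrite -(uCp C CF pC) eqxx in CpC.
by rewrite -(uCp Y YF pY) xY in xCp.
Qed.

Lemma DP_unique_res p Cp : p.1 != x.1 -> unique_in F p Cp -> Cp != C ->
  compl x \in Cp -> unique_in (DP x.1 F) p (res C Cp x).
Proof.
move=> px [CpF pCp uCp] CpC xCp; split; rewrite ?DP_res ?in_res_var ?pCp ?orbT //.
move=> K /DP_uniqueP [[KF Kv] pK|[Y /andP [YF xY] ->]].
  by rewrite (uCp K KF pK) (mem_vars_clause xCp) in Kv.
rewrite in_res_var // => /orP [pC|pY]; first by rewrite -(uCp C CF pC) eqxx in CpC.
by rewrite (uCp Y YF pY).
Qed.

Lemma DP_unique_res_compl p D : p.1 != x.1 -> unique_in F p C ->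
  unique_in F (compl x) D -> unique_in (DP x.1 F) p (res C D x).
Proof.
move=> px [_ pC uCp] [DF xD uD]; split; rewrite ?DP_res ?in_res_var ?pC //.
move=> K /DP_uniqueP [[KF Kv] pK|[Y /andP [YF xY] ->]].
  by rewrite (uCp K KF pK) (mem_vars_clause xC) in Kv.
by rewrite (uD Y YF xY).
Qed.

Lemma DP_singular_lit p Cp : p.1 != x.1 -> unique_in F p Cp -> Cp != C ->
  occurs F (compl x) -> occurs F (compl p) -> singular_lit (DP x.1 F) p.
Proof.
move=> px UCp CpC xF pF; split; last exact: DP_occurs.
case: (boolP (compl x \in Cp)) => xCp.
  by exists (res C Cp x); apply: DP_unique_res.
by exists Cp; apply: DP_unique_keep.
Qed.

Lemma unique_of_DP p X : p.1 != x.1 -> p \notin C -> unique_in (DP x.1 F) p X ->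
  exists Cp, unique_in F p Cp.
Proof.
move=> px pC [XG pX uX].
have image K : K \in F -> p \in K ->
    (x.1 \notin vars_clause K /\ K = X) \/ (compl x \in K /\ res C K x = X).
  move=> KF pK; case: (boolP (x.1 \in vars_clause K)) => [/vars_clause_lit [xK|xK]|Kv].
  - by rewrite -(uniqC KF xK) pK in pC.
  - by right; split => //; apply: uX; rewrite ?DP_res ?in_res_var ?pK ?orbT.
  - by left; split => //; apply: uX; rewrite ?DP_keep.
case/DP_uniqueP: XG pX => [[XF Xv] pX|[Y /andP [YF xY] EX] pX].
  exists X; split => // K KF pK; case: (image K KF pK) => [[_ ->]|[xK E]] //.
  by move: (res_neq_novar KF xK XF Xv); rewrite E eqxx.
have pY : p \in Y by move: pX; rewrite EX in_res_var // (negbTE pC).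
exists Y; split => // K KF pK; case: (image K KF pK) => [[Kv EK]|[xK E]].
  by move: (res_neq_novar YF xY KF Kv); rewrite EK EX eqxx.
by apply: (res_inj KF xK YF xY); rewrite E EX.
Qed.

Lemma DP_ldeg_gt1 p D1 D2 : p \in C -> p.1 != x.1 -> D1 \in F -> D2 \in F ->
  compl x \in D1 -> compl x \in D2 -> D1 != D2 -> (1 < ldeg (DP x.1 F) p)%N.
Proof.
move=> pC px D1F D2F xD1 xD2 D12.
apply: (ldeg_gt1 (K1 := res C D1 x) (K2 := res C D2 x)); rewrite ?DP_res ?in_res_var ?pC //.
by apply: contraNneq D12 => /res_inj ->.
Qed.

End UniqueLiteral.

(** * Commutation of two singular eliminations *)

Lemma DP_DP_uniqueP F x C q Q K : minimally_unsat F -> unique_in F x C ->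
  unique_in (DP x.1 F) q Q ->
  K \in DP q.1 (DP x.1 F) <->
  [\/ [/\ K \in F, x.1 \notin vars_clause K & q.1 \notin vars_clause K],
      exists Y, [/\ Y \in F, compl x \in Y, K = res C Y x & q.1 \notin vars_clause K],
      exists Y, [/\ Y \in F, x.1 \notin vars_clause Y, compl q \in Y & K = res Q Y q] |
      exists Y, [/\ Y \in F, compl x \in Y, compl q \in res C Y x & K = res Q (res C Y x) q]].
Proof.
move=> MU UC UQ; have MUG := DP_minimally_unsat MU UC.
split.
  case/(DP_uniqueP MUG UQ K) => [[KG Kq]|[Y /andP [YG qY] ->]].
    case/(DP_uniqueP MU UC K): KG => [[KF Kx]|[Y /andP [YF xY] EK]].
      by constructor 1.
    by constructor 2; exists Y.
  case/(DP_uniqueP MU UC Y): YG qY => [[YF Yx]|[Y' /andP [YF xY] ->]] qY.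
    by constructor 3; exists Y.
  by constructor 4; exists Y'.
move=> H; apply/(DP_uniqueP MUG UQ K); case: H.
- by move=> [KF Kx Kq]; left; rewrite (DP_keep MU UC).
- by move=> [Y [YF xY -> Kq]]; left; rewrite (DP_res MU UC).
- by move=> [Y [YF Yx qY ->]]; right; exists Y; rewrite ?(DP_keep MU UC) ?qY.
- by move=> [Y [YF xY qY ->]]; right; exists (res C Y x); rewrite ?(DP_res MU UC) ?qY.
Qed.

Lemma DP_comm_sub F x l C C' K : minimally_unsat F -> unique_in F x C -> unique_in F l C' ->
  x.1 != l.1 -> C != C' -> compl x \notin C' -> compl l \notin C ->
  K \in DP l.1 (DP x.1 F) -> K \in DP x.1 (DP l.1 F).
Proof.
move=> MU UC UL xl CC' xC' lC.
have lx : l.1 != x.1 by rewrite eq_sym.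
have C'C : C' != C by rewrite eq_sym.
have [[CF xC _] [C'F lC' _]] := (UC, UL).
have nlC : l \notin C by apply: contraNN CC' => /(unique_inP UL CF) ->.
have nxC' : x \notin C' by apply: contraNN C'C => /(unique_inP UC C'F) ->.
move=> /(DP_DP_uniqueP _ MU UC (DP_unique_keep MU UC lx UL C'C xC')) H.
apply/(DP_DP_uniqueP _ MU UL (DP_unique_keep MU UL xl UC CC' lC)).
case: H => [[KF Kx Kl]|[Y [YF xY -> Kl]]|[Y [YF Yx lY ->]]|[Y [YF xY lY ->]]].
- by constructor 1.
- by constructor 3; exists Y; move: Kl; rewrite notin_vars_res // => /andP [].
- constructor 2; exists Y; split => //.
  by rewrite notin_vars_res // Yx notin_vars_clause nxC' xC'.
- constructor 4; exists Y; split => //.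
  + by move: lY; rewrite in_res_var // (negbTE lC).
  + by rewrite in_res_var // xY orbT.
  by rewrite resC res_resA // (resC Y).
Qed.

Lemma DP_comm_distinct F x l C C' : minimally_unsat F -> unique_in F x C -> unique_in F l C' ->
  x.1 != l.1 -> C != C' -> compl x \notin C' -> compl l \notin C ->
  DP l.1 (DP x.1 F) = DP x.1 (DP l.1 F).
Proof.
move=> MU UC UL xl CC' xC' lC; apply/fsetP => K; apply/idP/idP.
  exact: DP_comm_sub MU UC UL xl CC' xC' lC.
by apply: DP_comm_sub MU UL UC _ _ lC xC'; rewrite eq_sym.
Qed.

Lemma DP_comm_res F x l C C' : minimally_unsat F -> unique_in F x C -> unique_in F l C' ->
  x.1 != l.1 -> C != C' -> compl x \in C' ->
  DP l.1 (DP x.1 F) = DP x.1 (DP l.1 F).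
Proof.
move=> MU UC UL xl CC' xC'.
have lx : l.1 != x.1 by rewrite eq_sym.
have C'C : C' != C by rewrite eq_sym.
have [[CF xC _] [C'F lC' _]] := (UC, UL).
have lC : compl l \notin C.
  apply: contraNN xl => lC; have := unique_clause_clash MU UC C'F xC' lC.
  by rewrite complK => /(_ lC') <-.
have nlC : l \notin C by apply: contraNN CC' => /(unique_inP UL CF) ->.
have UG1 := DP_unique_res MU UC lx UL C'C xC'.
have UG2 := DP_unique_keep MU UL xl UC CC' lC.
apply/fsetP => K; apply/idP/idP.
  move/(DP_DP_uniqueP _ MU UC UG1) => H; apply/(DP_DP_uniqueP _ MU UL UG2).
  case: H => [[KF Kx Kl]|[Y [YF xY -> Kl]]|[Y [YF Yx lY ->]]|[Y [YF xY lY ->]]].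
  - by constructor 1.
  - by constructor 3; exists Y; move: Kl; rewrite notin_vars_res // => /andP [].
  - constructor 4; exists Y; rewrite in_res_var // xC'; split => //.
    by move: Yx; rewrite notin_vars_clause => /andP [? ?]; rewrite res_resA.
  - constructor 4; exists Y; rewrite in_res_var // xC'; split => //.
      by move: lY; rewrite in_res_var // (negbTE lC).
    by rewrite res_res_shared.
move/(DP_DP_uniqueP _ MU UL UG2) => H; apply/(DP_DP_uniqueP _ MU UC UG1).
case: H => [[KF Kl Kx]|[Y [YF lY -> Kx]]|[Y [YF Yl xY ->]]|[Y [YF lY xY ->]]].
- by constructor 1.
- by move: Kx; rewrite notin_vars_clause !in_res_var // xC' /= andbF.
- constructor 2; exists Y; split => //.
  by rewrite notin_vars_res // Yl notin_vars_clause nlC lC.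
case: (boolP (x.1 \in vars_clause Y)) => [/vars_clause_lit [xY'|xY']|Yx].
- by rewrite -(unique_inP UC YF xY') lY in lC.
- constructor 4; exists Y; rewrite in_res_var ?lY ?orbT //; split => //.
  by rewrite res_res_shared.
- constructor 3; exists Y; split => //.
  by move: Yx; rewrite notin_vars_clause => /andP [? ?]; rewrite res_resA.
Qed.

Lemma DP_comm_shared F x l C D : minimally_unsat F -> unique_in F x C -> unique_in F l C ->
  x.1 != l.1 -> unique_in F (compl x) D ->
  DP l.1 (DP x.1 F) = DP x.1 (DP l.1 F).
Proof.
move=> MU UC UL xl UD.
have lx : l.1 != x.1 by rewrite eq_sym.
have [[CF xC _] [_ lC _]] := (UC, UL); have [DF xD _] := UD.
have DC : D != C by apply: contraTneq xD => ->; apply: compl_notin_unique_clause UC.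
have lD : compl l \notin D.
  by apply: contraNN xl => lD; rewrite (unique_clause_clash MU UC DF xD lC lD).
have nlD : l \notin D by apply: contraNN DC => /(unique_inP UL DF) ->.
have lC' : compl l \notin C := compl_notin_unique_clause MU UL.
have UG1 := DP_unique_res_compl MU UC lx UL UD.
have UG2 := DP_unique_keep MU UL (xl : (compl x).1 != l.1) UD DC lD.
have swap Y : x \notin Y -> compl x \notin Y ->
    res (res C D x) Y l = res D (res C Y l) (compl x).
  by move=> ? ?; rewrite res_compl (resC C) res_resA.
apply/fsetP => K; apply/idP/idP.
  move/(DP_DP_uniqueP _ MU UC UG1) => H; apply/(DP_DP_uniqueP _ MU UL UG2).
  case: H => [[KF Kx Kl]|[Y [YF xY -> Kl]]|[Y [YF Yx lY ->]]|[Y [YF xY lY ->]]].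
  - by constructor 1.
  - by move: Kl; rewrite (unique_inP UD YF xY) notin_vars_clause !in_res_var // lC.
  - constructor 4; exists Y; rewrite complK in_res_var // xC; split => //.
    by move: Yx; rewrite notin_vars_clause => /andP [? ?]; rewrite swap.
  - by move: lY; rewrite (unique_inP UD YF xY) in_res_var // (negbTE lC') (negbTE lD).
move/(DP_DP_uniqueP _ MU UL UG2) => H; apply/(DP_DP_uniqueP _ MU UC UG1).
case: H => [[KF Kl Kx]|[Y [YF lY -> Kx]]|[Y [YF Yl xY ->]]|[Y [YF lY xY ->]]].
- by constructor 1.
- by move: Kx; rewrite notin_vars_clause complK !in_res_var // xC /= andbF.
- by move: Yl; rewrite complK in xY; rewrite (unique_inP UC YF xY) notin_vars_clause lC.
have Yx : x.1 \notin vars_clause Y.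
  rewrite notin_vars_clause; apply/andP; split.
    by apply: contraNN lC' => /(unique_inP UC YF) <-.
  by apply: contraNN lD => /(unique_inP UD YF) <-.
constructor 3; exists Y; split => //.
by move: Yx; rewrite notin_vars_clause => /andP [? ?]; rewrite swap.
Qed.

(* Two singular DP steps commute unless the literals share their unique clause
   while both complements occur at least twice. *)
Definition independent_lits (F : clauseset) (p : lit) (X : clause) (q : lit) (Y : clause) :=
  [\/ X != Y, exists D, unique_in F (compl p) D | exists D, unique_in F (compl q) D].

Lemma DP_comm F x l C C' : minimally_unsat F -> unique_in F x C -> unique_in F l C' ->
  x.1 != l.1 ->
  independent_lits F x C l C' ->
  DP l.1 (DP x.1 F) = DP x.1 (DP l.1 F).
Proof.
move=> MU UC UL xl H.
have lx : l.1 != x.1 by rewrite eq_sym.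
case: (eqVneq C C') UL H => [<-|CC'] UL H.
  case: H => [CC|[D UD]|[D UD]]; first by rewrite eqxx in CC.
    exact: DP_comm_shared MU UC UL xl UD.
  by rewrite (DP_comm_shared MU UL UC lx UD).
case: (boolP (compl x \in C')) => xC'; first exact: DP_comm_res MU UC UL xl CC' xC'.
case: (boolP (compl l \in C)) => lC; last exact: DP_comm_distinct MU UC UL xl CC' xC' lC.
by rewrite (DP_comm_res MU UL UC lx _ lC) // eq_sym.
Qed.

Lemma DP_singular F p X q Y : minimally_unsat F ->
  unique_in F p X -> occurs F (compl p) -> unique_in F q Y -> occurs F (compl q) ->
  p.1 != q.1 ->
  independent_lits F p X q Y ->
  singular (DP p.1 F) q.1.
Proof.
move=> MU UX pF UY qF pq H.
have qp : q.1 != p.1 by rewrite eq_sym.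
case: (eqVneq X Y) UY H => [<-|XY] UY H; last first.
  apply/singularP; exists q; split => //.
  by apply: (DP_singular_lit MU UX qp UY); rewrite // eq_sym.
have [XF qX _] := UY.
case: H => [XX|[D UD]|[D UD]]; first by rewrite eqxx in XX.
  apply/singularP; exists q; split => //; split; last exact: (DP_occurs MU UX).
  by exists (res X D p); apply: (DP_unique_res_compl MU UX).
have [DF qD _] := UD.
have DX : D != X by apply: contraTneq qD => ->; apply: compl_notin_unique_clause UY.
have pD : compl p \notin D.
  by apply: contraNN pq => pD; rewrite (unique_clause_clash MU UX DF pD qX qD).
apply/singularP; exists (compl q); split => //; split.
  by exists D; apply: (DP_unique_keep MU UX).
by rewrite complK; apply: (DP_occurs MU UX) => //; exists X.
Qed.

Definition joinable (F : clauseset) (v w : var) :=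
  [/\ singular (DP v F) w, singular (DP w F) v & DP w (DP v F) = DP v (DP w F)].

Lemma joinable_lits F p X q Y : minimally_unsat F ->
  unique_in F p X -> occurs F (compl p) -> unique_in F q Y -> occurs F (compl q) ->
  p.1 != q.1 ->
  independent_lits F p X q Y ->
  joinable F p.1 q.1.
Proof.
move=> MU UX pF UY qF pq H; split; [exact: DP_singular H| |exact: DP_comm MU UX UY pq H].
apply: DP_singular MU UY qF UX pF _ _; first by rewrite eq_sym.
by case: H => H; [constructor 1; rewrite eq_sym|constructor 3|constructor 2].
Qed.

Lemma DP_nonsingular_var F x C : minimally_unsat F -> unique_in F x C ->
  ~ singular (DP x.1 F) x.1.
Proof.
move=> MU UC /singularP [r [rx [[K [KG rK _]] _]]].
by move: (DP_novar MU UC KG); rewrite -rx (mem_vars_clause rK).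
Qed.

Lemma not_unique_clause (F : clauseset) (p : lit) (K1 : clause) :
  K1 \in F -> p \in K1 -> ~ (exists D, unique_in F p D) ->
  exists K2, [/\ K2 \in F, p \in K2 & K1 != K2].
Proof.
move=> K1F pK1 NU; apply: NNPP => N2; apply: NU; exists K1; split => // K KF pK.
by apply: NNPP => K1K; apply: N2; exists K; split => //; apply/eqP => /esym.
Qed.

(* The unique clause of [u] in [F] differs from [X], so [u] is independent of
   both [p] and [q]. *)
Lemma shared_clause_joinable F p q X u : minimally_unsat F ->
  unique_in F p X -> occurs F (compl p) -> ~ (exists D, unique_in F (compl p) D) ->
  unique_in F q X -> occurs F (compl q) -> ~ (exists D, unique_in F (compl q) D) ->
  p.1 != q.1 -> singular (DP p.1 F) u ->
  [/\ singular F u, joinable F p.1 u & joinable F q.1 u].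
Proof.
move=> MU UX pF NUp UY qF NUq pq /singularP [r [<- [[Q UQ] rG]]].
have [XF pX _] := UX; have [_ qX _] := UY.
have rp : r.1 != p.1.
  apply: (contra_not_neq _ (DP_nonsingular_var MU UX)) => e.
  by apply/singularP; exists r; split => //; split => //; exists Q.
have rX : r \notin X.
  have [D1 D1F pD1] := pF; have [D2 [D2F pD2 D12]] := not_unique_clause D1F pD1 NUp.
  apply/negP => rX; have := DP_ldeg_gt1 MU UX rX rp D1F D2F pD1 pD2 D12.
  by rewrite (proj2 (ldeg1P _ _) (ex_intro _ Q UQ)).
have [Cr UCr] := unique_of_DP MU UX rp rX UQ.
have CrX : X != Cr by apply: contraNneq rX => ->; case: UCr.
have rF := occurs_of_DP MU UX rG.
have rq : q.1 != r.1.
  apply/eqP => /esym/eq_var_lit [rq|rq]; first by rewrite rq qX in rX.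
  by apply: NUq; exists Cr; rewrite -rq.
split; first by apply/singularP; exists r; split => //; split => //; exists Cr.
  by apply: joinable_lits MU UX pF UCr rF _ _; [rewrite eq_sym|constructor 1].
by apply: joinable_lits MU UY qF UCr rF rq _; constructor 1.
Qed.

Lemma singular_pair_cases F v w :
  minimally_unsat F -> singular F v -> singular F w -> v != w ->
  [\/ joinable F v w, nonsingular (DP v F) /\ nonsingular (DP w F) |
      exists u, [/\ singular F u, joinable F v u & joinable F w u]].
Proof.
move=> MU /singularP [p [<- [[X UX] pF]]] /singularP [q [<- [[Y UY] qF]]] pq.
case: (classic (independent_lits F p X q Y)) => [H|NH].
  by constructor 1; apply: joinable_lits MU UX pF UY qF pq H.
have XY : X = Y by apply: NNPP => XY; apply: NH; constructor 1; apply/eqP.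
have NUp : ~ exists D, unique_in F (compl p) D by move=> H; apply: NH; constructor 2.
have NUq : ~ exists D, unique_in F (compl q) D by move=> H; apply: NH; constructor 3.
subst Y; have qp : q.1 != p.1 by rewrite eq_sym.
case: (classic (exists u, singular (DP p.1 F) u \/ singular (DP q.1 F) u)).
  move=> [u [Su|Su]]; constructor 3; exists u.
    exact: shared_clause_joinable MU UX pF NUp UY qF NUq pq Su.
  by have [? ? ?] := shared_clause_joinable MU UY qF NUq UX pF NUp qp Su.
by move=> NS; constructor 2; split => u Su; apply: NS; exists u; [left|right].
Qed.

(** * Normal forms *)

Lemma DP_singular_MU F v : minimally_unsat F -> singular F v -> minimally_unsat (DP v F).
Proof. by move=> MU /singularP [p [<- [[X UX] _]]]; apply: DP_minimally_unsat MU UX. Qed.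

Lemma nvars_DP_singular F v : minimally_unsat F -> singular F v ->
  nvars (DP v F) = (nvars F).-1.
Proof. by move=> MU /singularP [p [<- [[X UX] pF]]]; apply: nvars_DP MU UX pF. Qed.

Lemma nvars_DP_lt F v : minimally_unsat F -> singular F v -> (nvars (DP v F) < nvars F)%N.
Proof.
move=> MU Sv; rewrite (nvars_DP_singular MU Sv) prednK //.
have /singularP [p [_ [[X [XF pX _]] _]]] := Sv.
rewrite cardfs_gt0; apply/fset0Pn; exists p.1.
by apply/varsP; exists X; rewrite ?mem_vars_clause.
Qed.

Definition normal_form (F N : clauseset) := sDP_reach F N /\ nonsingular N.

Lemma normal_form_inv F N : normal_form F N ->
  (N = F /\ nonsingular F) \/ exists2 v, singular F v & normal_form (DP v F) N.
Proof. by case=> [[F'|F' v N' _ Sv R]] NS; [left|right; exists v]. Qed.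

Lemma normal_form_step F v N : minimally_unsat F -> singular F v ->
  normal_form (DP v F) N -> normal_form F N.
Proof. by move=> MU Sv [R NS]; split => //; apply: sDP_step MU Sv R. Qed.

Lemma normal_form_exists F : minimally_unsat F -> exists N, normal_form F N.
Proof.
move: {2}(nvars F).+1 (ltnSn (nvars F)) => n; elim: n F => // n IH F /ltnSE lt MU.
case: (classic (nonsingular F)) => [NS|]; first by exists F; split => //; constructor.
move=> /not_all_ex_not [v /NNPP Sv].
have [|N NN] := IH (DP v F) _ (DP_singular_MU MU Sv).
  exact: leq_trans (nvars_DP_lt MU Sv) lt.
by exists N; apply: normal_form_step NN.
Qed.

Lemma normal_form_nonsingular F N : nonsingular F -> normal_form F N -> N = F.
Proof. by move=> NS /normal_form_inv [[]//|[v Sv _]]; case: (NS v). Qed.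

Definition unique_nf_nvars (F : clauseset) :=
  forall N1 N2, normal_form F N1 -> normal_form F N2 -> nvars N1 = nvars N2.

Lemma joinable_nf_nvars F v w N1 N2 : minimally_unsat F -> singular F v -> singular F w ->
  joinable F v w -> unique_nf_nvars (DP v F) -> unique_nf_nvars (DP w F) ->
  normal_form (DP v F) N1 -> normal_form (DP w F) N2 -> nvars N1 = nvars N2.
Proof.
move=> MU Sv Sw [Svw Swv Evw] Uv Uw NN1 NN2.
have [MUv MUw] := (DP_singular_MU MU Sv, DP_singular_MU MU Sw).
have [N NN] := normal_form_exists (DP_singular_MU MUv Svw).
rewrite (Uv _ _ NN1 (normal_form_step MUv Svw NN)).
by rewrite Evw in NN; rewrite (Uw _ _ (normal_form_step MUw Swv NN) NN2).
Qed.

Lemma unique_nf_nvars_MU F : minimally_unsat F -> unique_nf_nvars F.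
Proof.
move: {2}(nvars F).+1 (ltnSn (nvars F)) => n; elim: n F => // n IH F /ltnSE lt MU.
have IHv v : singular F v -> unique_nf_nvars (DP v F).
  move=> Sv; apply: IH (DP_singular_MU MU Sv).
  exact: leq_trans (nvars_DP_lt MU Sv) lt.
move=> N1 N2 NN1 NN2.
case: (normal_form_inv NN1) => [[-> NS]|[v Sv NN1']].
  by rewrite (normal_form_nonsingular NS NN2).
case: (normal_form_inv NN2) => [[_ NS]|[w Sw NN2']]; first by case: (NS v).
case: (eqVneq v w) NN2' Sw => [<-|vw] NN2' Sw; first exact: IHv v Sv _ _ NN1' NN2'.
case: (singular_pair_cases MU Sv Sw vw) => [J|[NSv NSw]|[u [Su Jvu Jwu]]].
- exact: joinable_nf_nvars MU Sv Sw J (IHv v Sv) (IHv w Sw) NN1' NN2'.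
- rewrite (normal_form_nonsingular NSv NN1') (normal_form_nonsingular NSw NN2').
  by rewrite !nvars_DP_singular.
- have [N NN] := normal_form_exists (DP_singular_MU MU Su).
  rewrite (joinable_nf_nvars MU Sv Su Jvu (IHv v Sv) (IHv u Su) NN1' NN).
  by rewrite (joinable_nf_nvars MU Sw Su Jwu (IHv w Sw) (IHv u Su) NN2' NN).
Qed.

Theorem corollary64 (F F' F'' : clauseset) :
  wf_clauseset F -> minimally_unsat F ->
  in_sDP F F' -> in_sDP F F'' -> nvars F' = nvars F''.
Proof.
move=> _ MU [R' [NS' _]] [R'' [NS'' _]].
exact: unique_nf_nvars_MU MU _ _ (conj R' NS') (conj R'' NS'').
Qed.
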